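(* Let $a<b$, $c<d$, $C\in\mathbb{R}\setminus\{0\}$, $\Delta=\max\{b-a,d-c\}$, and let $N\ge2$ be an integer. Let $(p,q)$ be a pair of real sequences with $p_0=q_0$ and with $\|(p,q)\|_\gamma<\infty$ for some integer $\gamma\ge1$, where $$\|(p,q)\|_\gamma=\max\Big\{\sup_{n\ge0}\Big|\frac{(n!)^2p_n}{(\gamma|C|\Delta)^n}\Big|,\ \sup_{n\ge0}\Big|\frac{(n!)^2q_n}{(\gamma|C|\Delta)^n}\Big|\Big\}.$$ Let $k$ be the solution of the Goursat problem $\partial^2k/\partial s\partial t=Ck$ on $[a,b]\times[c,d]$ with $k(s,c)=\sum_{n\ge0}p_n(s-a)^n$ and $k(a,t)=\sum_{n\ge0}q_n(t-c)^n$. For $0\le n\le N$ set $$\hat p_n=\sum_{k=0}^{n}p_k\frac{(C(d-c))^{n-k}k!}{(n-k)!\,n!}+\sum_{k=1}^{N}q_k\frac{C^n(d-c)^{n+k}k!}{(n+k)!\,n!},\qquad \hat q_n=\sum_{k=0}^{n}q_k\frac{(C(b-a))^{n-k}k!}{(n-k)!\,n!}+\sum_{k=1}^{N}p_k\frac{C^n(b-a)^{n+k}k!}{(n+k)!\,n!},$$ and $\hat k^N(b,d)=\frac12\sum_{n=0}^N\big(\hat p_n(b-a)^n+\hat q_n(d-c)^n\big)$. Then $$|k(b,d)-\hat k^N(b,d)|\le 2\|(p,q)\|_\gamma\,I_0(2\sqrt{\gamma|C|}\Delta)\,I_0(2\sqrt{(\gamma+1)|C|}\Delta)\,\frac{(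|C|\Delta^2)^{N+1}(\gamma+1)^{N+1}}{[(N+1)!]^2}.$$
   Context: The solution of the Goursat problem is the continuous function $k$ on $[a,b]\times[c,d]$ with $k(s,t)=k(s,c)+k(a,t)-k(a,c)+C\int_a^s\int_c^t k(r,w)\,dw\,dr$. $I_0$ is the zero-order modified Bessel function of the first kind, $I_0(2z)=\sum_{k\ge0}z^{2k}/(k!)^2$. The quantities $\hat p,\hat q$ are the order-$N$ truncations of the boundary coefficient map applied to the order-$N$ truncated input coefficients. *)

From Stdlib Require Import Reals Arith Factorial.
From Coquelicot Require Import Coquelicot.
Open Scope R_scope.

Definition I0 (x : R) : R :=
  Series (fun k => (x / 2) ^ (2 * k) / (INR (fact k)) ^ 2).

Definition pq_weighted (gamma C Delta : R) (p q : nat -> R) (n : nat) : R :=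
  Rmax (Rabs ((INR (fact n)) ^ 2 * p n / (gamma * Rabs C * Delta) ^ n))
       (Rabs ((INR (fact n)) ^ 2 * q n / (gamma * Rabs C * Delta) ^ n)).

Definition pq_norm_Rbar (gamma C Delta : R) (p q : nat -> R) : Rbar :=
  Sup_seq (pq_weighted gamma C Delta p q).

(* Its real value (meaningful when the supremum is finite). *)
Definition pq_norm (gamma C Delta : R) (p q : nat -> R) : R :=
  real (pq_norm_Rbar gamma C Delta p q).

Definition cont_on_rect (k : R -> R -> R) (a b c d : R) : Prop :=
  forall s t, a <= s <= b -> c <= t <= d ->
    filterlim (fun z : R * R => k (fst z) (snd z))
      (within (fun z : R * R => a <= fst z <= b /\ c <= snd z <= d)
              (locally (s, t)))
      (locally (k s t)).

(* k solves the Goursat problem d^2k/dsdt = C k on [a,b]x[c,d] in the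
   integral-equation sense of the paper. *)
Definition goursat_solution (k : R -> R -> R) (a b c d C : R) : Prop :=
  cont_on_rect k a b c d /\
  forall s t, a <= s <= b -> c <= t <= d ->
    k s t = k s c + k a t - k a c
            + C * RInt (fun r => RInt (fun w => k r w) c t) a s.

Definition p_hat (N : nat) (a b c d C : R) (p q : nat -> R) (n : nat) : R :=
  sum_n (fun j => p j * (C * (d - c)) ^ (n - j) * INR (fact j)
                   / (INR (fact (n - j)) * INR (fact n))) n
  + sum_n_m (fun j => q j * C ^ n * (d - c) ^ (n + j) * INR (fact j)
                   / (INR (fact (n + j)) * INR (fact n))) 1 N.

Definition q_hat (N : nat) (a b c d C : R) (p q : nat -> R) (n : nat) : R :=
  sum_n (fun j => q j * (C * (b - a)) ^ (n - j) * INR (fact j)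
                   / (INR (fact (n - j)) * INR (fact n))) n
  + sum_n_m (fun j => p j * C ^ n * (b - a) ^ (n + j) * INR (fact j)
                   / (INR (fact (n + j)) * INR (fact n))) 1 N.

Definition k_hat (N : nat) (a b c d C : R) (p q : nat -> R) : R :=
  / 2 * sum_n (fun n => p_hat N a b c d C p q n * (b - a) ^ n
                        + q_hat N a b c d C p q n * (d - c) ^ n) N.

(* Picard iteration.  With V f (s, t) = int_a^s int_c^t f and k0 the boundary data
   k(s,c) + k(a,t) - k(a,c), the integral equation reads k = k0 + C V k, hence
   k = sum_(i <= M) C^i V^i k0 + R_(M+1) with |R_m| <= B |C|^m (s-a)^m (t-c)^m / (m!)^2,
   which tends to 0.  The iterates V^i k0 are explicit in terms of the i-fold
   antiderivatives of the two boundary series.  Expanding sum_i C^i V^i k0 (b, d) as a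
   double series in (i, n), once in powers of b - a and once in powers of d - c, the
   truncations to n <= N are the two halves of k_hat.  The bounds
   |p_n|, |q_n| <= ||(p,q)|| rho^n / (n!)^2, rho = gamma |C| Delta, dominate the (i, n)
   cell by ||(p,q)|| gamma^(n-i) L^n / (i! (n-i)! n!), L = |C| Delta^2, whose column
   sums are ((gamma+1) L)^n / (n!)^2.  So each truncation error is at most twice the
   tail after N of that series, and that tail is at most its (N+1)-st term times
   I0(2 sqrt((gamma+1) |C|) Delta). *)

From Stdlib Require Import Reals Arith Factorial Lra Lia Classical ClassicalEpsilon.
From Coquelicot Require Import Coquelicot.
Open Scope R_scope.

(** * Real integrals and series *)

Lemma is_RInt_plusR (f g : R -> R) a b If Ig : is_RInt f a b If -> is_RInt g a b Ig ->
  is_RInt (fun y => f y + g y) a b (If + Ig).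
Proof. intros; apply (is_RInt_plus (V := R_NormedModule)); auto. Qed.

Lemma is_RInt_minusR (f g : R -> R) a b If Ig : is_RInt f a b If -> is_RInt g a b Ig ->
  is_RInt (fun y => f y - g y) a b (If - Ig).
Proof. intros; apply (is_RInt_minus (V := R_NormedModule)); auto. Qed.

Lemma is_RInt_scalR (f : R -> R) a b l If : is_RInt f a b If ->
  is_RInt (fun y => l * f y) a b (l * If).
Proof. intros; apply (is_RInt_scal (V := R_NormedModule)); auto. Qed.

Lemma is_RInt_scalR_r (f : R -> R) a b l If : is_RInt f a b If ->
  is_RInt (fun y => f y * l) a b (If * l).
Proof.
  intros H. apply (is_RInt_ext (V := R_NormedModule) (fun y => l * f y)).
  - intros; simpl; ring.
  - rewrite Rmult_comm. now apply is_RInt_scalR.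
Qed.

Lemma RInt_uniqueR (f : R -> R) a b l : is_RInt f a b l -> RInt f a b = l.
Proof. apply (is_RInt_unique (V := R_CompleteNormedModule)). Qed.

Lemma ex_RInt_of_is (f : R -> R) a b l : is_RInt f a b l -> ex_RInt f a b.
Proof. intros H; exists l; exact H. Qed.

Lemma ex_RInt_continuousR (f : R -> R) a b :
  (forall z, Rmin a b <= z <= Rmax a b -> continuous f z) -> ex_RInt f a b.
Proof. apply (ex_RInt_continuous (V := R_CompleteNormedModule)). Qed.

Lemma RInt_minusR (f g : R -> R) a b : ex_RInt f a b -> ex_RInt g a b ->
  RInt (fun x => f x - g x) a b = RInt f a b - RInt g a b.
Proof. intros; apply (RInt_minus (V := R_CompleteNormedModule)); auto. Qed.

Lemma RInt_scalR (f : R -> R) a b l : ex_RInt f a b ->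
  RInt (fun x => l * f x) a b = l * RInt f a b.
Proof. intros; apply (RInt_scal (V := R_CompleteNormedModule)); auto. Qed.

Lemma ex_RInt_minusR (f g : R -> R) a b : ex_RInt f a b -> ex_RInt g a b ->
  ex_RInt (fun x => f x - g x) a b.
Proof. intros; apply (ex_RInt_minus (V := R_NormedModule)); auto. Qed.

Lemma ex_RInt_scalR (f : R -> R) a b l : ex_RInt f a b ->
  ex_RInt (fun x => l * f x) a b.
Proof. intros; apply (ex_RInt_scal (V := R_NormedModule)); auto. Qed.

Lemma RInt_Rabs_le (g h : R -> R) c t : c <= t -> ex_RInt g c t -> ex_RInt h c t ->
  (forall w, c < w < t -> Rabs (g w) <= h w) -> Rabs (RInt g c t) <= RInt h c t.
Proof.
  intros Hct Hg Hh Hb.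
  assert (L1 : RInt g c t <= RInt h c t).
  { apply RInt_le; auto. intros x Hx. specialize (Hb x Hx). apply Rabs_le_between in Hb. lra. }
  assert (L2 : RInt (fun x => -1 * h x) c t <= RInt g c t).
  { apply RInt_le; auto. { now apply ex_RInt_scalR. }
    intros x Hx. specialize (Hb x Hx). apply Rabs_le_between in Hb. lra. }
  rewrite RInt_scalR in L2 by auto. apply Rabs_le. lra.
Qed.

Lemma INR_fact_ge_1 n : 1 <= INR (fact n).
Proof. apply (le_INR 1), lt_O_fact. Qed.

Lemma INR_fact_mul_le m n : INR (fact m) * INR (fact n) <= INR (fact (m + n)).
Proof.
  rewrite <- mult_INR. apply le_INR.
  induction n as [|n IH]; [rewrite Nat.add_0_r; simpl; lia|].
  rewrite Nat.add_succ_r. simpl fact.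
  assert (n * (fact m * fact n) <= (m + n) * fact (m + n))%nat
    by (apply Nat.mul_le_mono; lia).
  nia.
Qed.

Lemma ex_series_dominated (u w : nat -> R) :
  (forall n, Rabs (u n) <= w n) -> ex_series w -> ex_series u.
Proof. intros H Hw. now apply (ex_series_le (V := R_CompleteNormedModule)) with w. Qed.

Lemma ex_series_exp_terms z : ex_series (fun n => z ^ n / INR (fact n)).
Proof.
  exists (exp z). eapply is_series_ext; [|exact (is_exp_Reals z)].
  intros n. simpl. rewrite pow_n_pow. unfold scal; simpl; unfold mult; simpl. unfold Rdiv. ring.
Qed.

Lemma sum_f_R0_le_mono (w : nat -> R) N K : (forall n, 0 <= w n) -> (N <= K)%nat ->
  sum_f_R0 w N <= sum_f_R0 w K.
Proof.
  intros Hw H. induction H as [|K H IH]; [lra|]. rewrite tech5. specialize (Hw (S K)). lra.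
Qed.

Lemma Series_tail_le (u w : nat -> R) N K :
  (forall n, Rabs (u n) <= w n) -> ex_series w -> (N <= K)%nat ->
  Rabs (Series u - sum_f_R0 u K) <= Series w - sum_f_R0 w N.
Proof.
  intros Huw Hw HNK.
  assert (Hw0 : forall n, 0 <= w n) by (intros n; eapply Rle_trans; [apply Rabs_pos|apply Huw]).
  assert (Hu : ex_series u) by (now apply ex_series_dominated with w).
  rewrite (Series_incr_n u (S K)), (Series_incr_n w (S K)) by (auto; lia).
  simpl Init.Nat.pred.
  replace (sum_f_R0 u K + Series (fun k => u (S K + k)%nat) - sum_f_R0 u K)
    with (Series (fun k => u (S K + k)%nat)) by ring.
  assert (HwK : ex_series (fun k => w (S K + k)%nat))
    by now apply (ex_series_incr_n (V := R_NormedModule) w (S K)).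
  assert (Rabs (Series (fun k => u (S K + k)%nat)) <= Series (fun k => w (S K + k)%nat)).
  { eapply Rle_trans; [apply Series_Rabs|].
    - apply ex_series_dominated with (fun k => w (S K + k)%nat); auto.
      intros; rewrite Rabs_Rabsolu; auto.
    - apply Series_le; auto. intros n; split; [apply Rabs_pos|apply Huw]. }
  pose proof (sum_f_R0_le_mono w N K Hw0 HNK). lra.
Qed.

Lemma Series_sum_f_R0 (f : nat -> nat -> R) M : (forall i, ex_series (f i)) ->
  Series (fun n => sum_f_R0 (fun i => f i n) M) = sum_f_R0 (fun i => Series (f i)) M /\
  ex_series (fun n => sum_f_R0 (fun i => f i n) M).
Proof.
  intros Hf. induction M as [|M [IH1 IH2]]; simpl; [split; auto|].
  rewrite Series_plus, IH1 by auto. split; [reflexivity|].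
  now apply (ex_series_plus (V := R_NormedModule)).
Qed.

Lemma Series_ge_first (u : nat -> R) : ex_series u -> (forall n, 0 <= u n) -> u 0%nat <= Series u.
Proof.
  intros Hu H0. rewrite (Series_incr_n u 1) by (auto; lia). simpl.
  assert (0 <= Series (fun k => u (S k))).
  { replace 0 with (Series (fun k => 0 * u (S k))) by (rewrite Series_scal_l; ring).
    apply Series_le.
    - intros n; rewrite Rmult_0_l; split; [lra|auto].
    - now apply (ex_series_incr_1 (V := R_NormedModule) u). }
  lra.
Qed.

Lemma sum_f_R0_rev (f : nat -> R) n : sum_f_R0 (fun j => f (n - j)%nat) n = sum_f_R0 f n.
Proof.
  induction n as [|n IH]; [reflexivity|].
  rewrite decomp_sum by lia. simpl Init.Nat.pred. rewrite tech5, Nat.sub_0_r, <- IH.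
  replace (sum_f_R0 (fun i => f (S n - S i)%nat) n) with (sum_f_R0 (fun j => f (n - j)%nat) n).
  - ring.
  - apply sum_eq. intros. f_equal.
Qed.

Lemma sum_f_R0_swap (f : nat -> nat -> R) M N :
  sum_f_R0 (fun i => sum_f_R0 (fun n => f i n) N) M =
  sum_f_R0 (fun n => sum_f_R0 (fun i => f i n) M) N.
Proof.
  induction M as [|M IH]; [reflexivity|].
  rewrite tech5, IH, <- plus_sum. apply sum_eq. intros. now rewrite tech5.
Qed.

Lemma sum_f_R0_zero_tail (f : nat -> R) N M : (N <= M)%nat ->
  (forall i, (N < i)%nat -> f i = 0) -> sum_f_R0 f M = sum_f_R0 f N.
Proof.
  intros H Hz. induction H as [|M H IH]; [reflexivity|].
  rewrite tech5, IH, Hz by lia. ring.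
Qed.

Lemma sum_f_R0_zero_head (u : nat -> R) i K : (forall m, (m < i)%nat -> u m = 0) ->
  sum_f_R0 u (i + K) = sum_f_R0 (fun j => u (i + j)%nat) K.
Proof.
  intros Hz. induction K as [|K IH].
  - simpl. rewrite Nat.add_0_r. destruct i as [|i]; [reflexivity|].
    rewrite tech5, sum_eq_R0; [ring|]. intros; apply Hz; lia.
  - rewrite Nat.add_succ_r, tech5, IH, tech5. do 2 f_equal. lia.
Qed.

(** * The Bessel series *)

Definition bessel_term (z : R) (n : nat) : R := z ^ n / INR (fact n) ^ 2.

Lemma bessel_term_nonneg z n : 0 <= z -> 0 <= bessel_term z n.
Proof.
  intros Hz. apply Rdiv_le_0_compat; [now apply pow_le|].
  apply pow_lt, INR_fact_lt_0.
Qed.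

Lemma ex_series_bessel_term z : 0 <= z -> ex_series (bessel_term z).
Proof.
  intros Hz. apply ex_series_dominated with (fun n => z ^ n / INR (fact n));
    [|apply ex_series_exp_terms].
  intros n. pose proof (INR_fact_ge_1 n).
  rewrite Rabs_pos_eq by now apply bessel_term_nonneg.
  unfold bessel_term, Rdiv. apply Rmult_le_compat_l; [now apply pow_le|].
  apply Rinv_le_contravar; nra.
Qed.

Lemma I0_Series u x : 0 <= u -> I0 (2 * sqrt u * x) = Series (bessel_term (u * x ^ 2)).
Proof.
  intros Hu. unfold I0. apply Series_ext. intros k. unfold bessel_term. f_equal.
  rewrite pow_mult. f_equal.
  replace (2 * sqrt u * x / 2) with (sqrt u * x) by field.
  rewrite Rpow_mult_distr, pow2_sqrt by exact Hu. reflexivity.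
Qed.

Lemma I0_ge_1 u x : 0 <= u -> 1 <= I0 (2 * sqrt u * x).
Proof.
  intros Hu. assert (Hz : 0 <= u * x ^ 2) by (apply Rmult_le_pos; [lra|apply pow2_ge_0]).
  rewrite I0_Series by exact Hu.
  replace 1 with (bessel_term (u * x ^ 2) 0) by (unfold bessel_term; simpl; field).
  apply Series_ge_first; [now apply ex_series_bessel_term|].
  intros; now apply bessel_term_nonneg.
Qed.

(* Since (N+1+k)! >= (N+1)! k!, the tail after N is dominated termwise. *)
Lemma bessel_tail_le z N : 0 <= z ->
  Series (bessel_term z) - sum_f_R0 (bessel_term z) N
  <= bessel_term z (S N) * Series (bessel_term z).
Proof.
  intros Hz.
  rewrite <- Series_scal_l.
  rewrite (Series_incr_n (bessel_term z) (S N)) by (try lia; now apply ex_series_bessel_term).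
  simpl Init.Nat.pred.
  enough (Series (fun k => bessel_term z (S N + k))
          <= Series (fun k => bessel_term z (S N) * bessel_term z k)) by lra.
  apply Series_le.
  2: { apply (ex_series_scal_l (V := R_NormedModule)). now apply ex_series_bessel_term. }
  intros k. split; [now apply bessel_term_nonneg|].
  unfold bessel_term. rewrite pow_add.
  pose proof (INR_fact_mul_le (S N) k). pose proof (INR_fact_lt_0 (S N)).
  pose proof (INR_fact_lt_0 k).
  replace (z ^ S N / INR (fact (S N)) ^ 2 * (z ^ k / INR (fact k) ^ 2))
    with (z ^ S N * z ^ k / (INR (fact (S N)) * INR (fact k)) ^ 2) by (field; lra).
  unfold Rdiv. apply Rmult_le_compat_l.
  - apply Rmult_le_pos; now apply pow_le.
  - apply Rinv_le_contravar; [apply pow_lt; nra|]. apply pow_incr. nra.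
Qed.

(** * Continuous functions on a rectangle *)

Definition in_rect (a b c d x y : R) : Prop := a <= x <= b /\ c <= y <= d.

Definition clamp (a b x : R) : R := Rmax a (Rmin b x).

Lemma clamp_in a b x : a <= b -> a <= clamp a b x <= b.
Proof. intros H; unfold clamp, Rmax, Rmin; repeat destruct Rle_dec; lra. Qed.

Lemma clamp_id a b x : a <= x <= b -> clamp a b x = x.
Proof. intros H; unfold clamp, Rmax, Rmin; repeat destruct Rle_dec; lra. Qed.

Lemma clamp_lipschitz a b x y : a <= b -> Rabs (clamp a b x - clamp a b y) <= Rabs (x - y).
Proof.
  intros H; unfold clamp, Rmax, Rmin; repeat destruct Rle_dec;
    unfold Rabs; repeat destruct Rcase_abs; lra.
Qed.

Lemma exists_INR_mul_gt x dl : 0 < dl -> exists m : nat, (0 < m)%nat /\ x < INR m * dl.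
Proof.
  intros Hdl. destruct (nfloor_ex (Rmax 0 (x / dl)) (Rmax_l _ _)) as [n [_ Hn]].
  exists (S n). split; [lia|]. rewrite S_INR.
  apply Rlt_div_l; [exact Hdl|]. pose proof (Rmax_r 0 (x / dl)). lra.
Qed.

Section ContinuousOnRectangle.

Variables (k : R -> R -> R) (a b c d : R).
Hypotheses (Hab : a <= b) (Hcd : c <= d) (Hk : cont_on_rect k a b c d).

Lemma cont_on_rect_at u v : in_rect a b c d u v ->
  forall eps : posreal, exists del : posreal, forall x y, in_rect a b c d x y ->
    Rabs (x - u) < del -> Rabs (y - v) < del -> Rabs (k x y - k u v) < eps.
Proof.
  intros [Hu Hv] eps.
  destruct (proj1 (filterlim_locally _ _) (Hk u v Hu Hv) eps) as [del Hdel].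
  exists del. intros x y [Hx Hy] H1 H2. now apply (Hdel (x, y)).
Qed.

Lemma cont_on_rect_unif (eps : posreal) : exists del : posreal, forall x y x' y',
  in_rect a b c d x y -> in_rect a b c d x' y' ->
  Rabs (x - x') < del -> Rabs (y - y') < del -> Rabs (k x y - k x' y') < eps.
Proof.
  assert (he2 : 0 < eps / 2) by (destruct eps; simpl; lra).
  set (e2 := mkposreal _ he2).
  assert (Hd : forall u v, {del : posreal | in_rect a b c d u v -> forall x y,
    in_rect a b c d x y -> Rabs (x - u) < del -> Rabs (y - v) < del ->
    Rabs (k x y - k u v) < e2}).
  { intros u v. apply constructive_indefinite_description.
    destruct (classic (in_rect a b c d u v)) as [H|H].
    - destruct (cont_on_rect_at u v H e2) as [del Hdel]. now exists del.
    - exists (mkposreal 1 Rlt_0_1). intro; contradiction. }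
  set (dl := fun u v => proj1_sig (Hd u v)).
  assert (Hdl : forall u v, 0 < dl u v / 2).
  { intros u v. unfold dl. destruct (proj1_sig (Hd u v)); simpl; lra. }
  destruct (compactness_value_2d a b c d (fun u v => mkposreal _ (Hdl u v))) as [d0 Hd0].
  exists d0. intros x y x' y' [Hx Hy] Hxy' H1 H2.
  apply NNPP. intro Hn. apply (Hd0 x y Hx Hy). intros [u [v [Hu [Hv [Hxu [Hyv Hdu]]]]]].
  apply Hn. simpl in *.
  pose proof (proj2_sig (Hd u v) (conj Hu Hv)) as Huv. fold (dl u v) in Huv.
  pose proof (Hdl u v).
  assert (A1 : Rabs (k x y - k u v) < e2) by (apply Huv; [split|..]; auto; lra).
  assert (A2 : Rabs (k x' y' - k u v) < e2).
  { apply Huv; [exact Hxy'| |].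
    - pose proof (Rabs_triang (x' - x) (x - u)). rewrite Rabs_minus_sym in H1.
      replace (x' - x + (x - u)) with (x' - u) in * by ring. lra.
    - pose proof (Rabs_triang (y' - y) (y - v)). rewrite Rabs_minus_sym in H2.
      replace (y' - y + (y - v)) with (y' - v) in * by ring. lra. }
  simpl in A1, A2.
  pose proof (Rabs_triang (k x y - k u v) (- (k x' y' - k u v))).
  rewrite Rabs_Ropp in *.
  replace (k x y - k u v + - (k x' y' - k u v)) with (k x y - k x' y') in * by ring.
  destruct eps; simpl in *; lra.
Qed.

(* Chain from (a, c) to (x, y) in m equal steps, each shorter than the modulus of
   uniform continuity for eps = 1. *)
Lemma cont_on_rect_bounded :
  exists B, 0 <= B /\ forall x y, in_rect a b c d x y -> Rabs (k x y) <= B.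
Proof.
  destruct (cont_on_rect_unif (mkposreal 1 Rlt_0_1)) as [[dl hdl] Hdel]. simpl in Hdel.
  destruct (exists_INR_mul_gt ((b - a) + (d - c)) dl hdl) as [m [Hm0 Hmdl]].
  assert (Hm : 0 < INR m) by now apply lt_0_INR.
  assert (Hb1 : b - a < INR m * dl) by lra.
  assert (Hd1 : d - c < INR m * dl) by lra.
  exists (Rabs (k a c) + INR m). split; [pose proof (Rabs_pos (k a c)); lra|].
  intros x y [Hx Hy].
  set (u := (x - a) / INR m). set (v := (y - c) / INR m).
  assert (Hu : INR m * u = x - a) by (unfold u; field; lra).
  assert (Hv : INR m * v = y - c) by (unfold v; field; lra).
  assert (Hu0 : 0 <= u) by (unfold u; apply Rdiv_le_0_compat; lra).
  assert (Hv0 : 0 <= v) by (unfold v; apply Rdiv_le_0_compat; lra).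
  assert (Hud : u < dl) by nra.
  assert (Hvd : v < dl) by nra.
  assert (Hchain : forall i, (i <= m)%nat ->
    Rabs (k (a + INR i * u) (c + INR i * v) - k a c) <= INR i).
  { induction i as [|i IH]; intros Hi.
    - simpl. rewrite !Rmult_0_l, !Rplus_0_r, Rminus_diag, Rabs_R0. lra.
    - specialize (IH ltac:(lia)).
      assert (HiR : INR (S i) <= INR m) by (apply le_INR; auto).
      pose proof (pos_INR i). rewrite S_INR in *.
      assert (Hstep : Rabs (k (a + (INR i + 1) * u) (c + (INR i + 1) * v)
                            - k (a + INR i * u) (c + INR i * v)) < 1).
      { apply Hdel; [split; split; nra | split; split; nra | |].
        - replace (a + (INR i + 1) * u - (a + INR i * u)) with u by ring.
          rewrite Rabs_pos_eq; lra.
        - replace (c + (INR i + 1) * v - (c + INR i * v)) with v by ring.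
          rewrite Rabs_pos_eq; lra. }
      eapply Rle_trans; [|apply Rplus_le_compat; [exact IH|exact (Rlt_le _ _ Hstep)]].
      eapply Rle_trans; [|apply Rabs_triang]. right. f_equal. ring. }
  specialize (Hchain m (le_n m)).
  replace (a + INR m * u) with x in Hchain by lra.
  replace (c + INR m * v) with y in Hchain by lra.
  pose proof (Rabs_triang (k x y - k a c) (k a c)).
  replace (k x y - k a c + k a c) with (k x y) in * by ring. lra.
Qed.

Lemma continuous_clamped_section r z : continuous (fun w => k (clamp a b r) (clamp c d w)) z.
Proof.
  apply filterlim_locally. intros eps.
  destruct (cont_on_rect_at (clamp a b r) (clamp c d z)
              (conj (clamp_in a b r Hab) (clamp_in c d z Hcd)) eps) as [del Hdel].
  exists del. intros w Hw. apply Hdel; [split; apply clamp_in; auto| |].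
  - rewrite Rminus_diag, Rabs_R0. apply cond_pos.
  - eapply Rle_lt_trans; [apply clamp_lipschitz; auto|exact Hw].
Qed.

Lemma cont_on_rect_ex_RInt_inner r t : a <= r <= b -> c <= t <= d ->
  ex_RInt (fun w => k r w) c t.
Proof.
  intros Hr Ht.
  apply ex_RInt_ext with (fun w => k (clamp a b r) (clamp c d w)).
  - intros x Hx. rewrite Rmin_left, Rmax_right in Hx by lra.
    rewrite (clamp_id a b r Hr), clamp_id by lra. reflexivity.
  - apply ex_RInt_continuousR. intros z _. apply continuous_clamped_section.
Qed.

Lemma cont_on_rect_ex_RInt_outer s t : a <= s <= b -> c <= t <= d ->
  ex_RInt (fun r => RInt (fun w => k r w) c t) a s.
Proof.
  intros Hs Ht.
  set (F := fun r => RInt (fun w => k (clamp a b r) (clamp c d w)) c t).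
  apply ex_RInt_ext with F.
  { intros x Hx. unfold F. apply RInt_ext. intros w Hw.
    rewrite Rmin_left, Rmax_right in Hx, Hw by lra.
    rewrite !clamp_id by lra. reflexivity. }
  apply ex_RInt_continuousR. intros z _. apply filterlim_locally. intros eps.
  assert (he : 0 < eps / (t - c + 1)) by (apply Rdiv_lt_0_compat; [apply cond_pos|lra]).
  destruct (cont_on_rect_unif (mkposreal _ he)) as [del Hdel]. simpl in Hdel.
  exists del. intros r Hr. change (Rabs (F r - F z) < eps). unfold F.
  rewrite <- RInt_minusR by (apply ex_RInt_continuousR; intros; apply continuous_clamped_section).
  eapply Rle_lt_trans.
  { apply abs_RInt_le_const with (M := eps / (t - c + 1)); [lra| |].
    - apply ex_RInt_minusR; apply ex_RInt_continuousR; intros; apply continuous_clamped_section.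
    - intros w Hw. apply Rlt_le, Hdel; try (split; apply clamp_in; auto).
      + eapply Rle_lt_trans; [apply clamp_lipschitz; auto|exact Hr].
      + rewrite Rminus_diag, Rabs_R0. apply cond_pos. }
  destruct eps as [e he0]; simpl in *.
  replace ((t - c) * (e / (t - c + 1))) with (e * ((t - c) / (t - c + 1))) by (field; lra).
  assert ((t - c) / (t - c + 1) < 1) by (apply Rlt_div_l; lra).
  nra.
Qed.

End ContinuousOnRectangle.

(** * Picard iterates *)

Definition prim_coef (p : nat -> R) (i : nat) : nat -> R := Nat.iter i PS_Int p.

Lemma prim_coef_eq p i n : prim_coef p i n =
  if (i <=? n)%nat then p (n - i)%nat * INR (fact (n - i)) / INR (fact n) else 0.
Proof.
  revert n; induction i as [|i IH]; intros n.
  - simpl. rewrite Nat.sub_0_r. field. apply INR_fact_neq_0.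
  - destruct n as [|n]; [reflexivity|].
    change (prim_coef p (S i) (S n)) with (prim_coef p i n / INR (S n)).
    rewrite IH. simpl (S i <=? S n)%nat. destruct (i <=? n)%nat; [|unfold Rdiv; ring].
    replace (S n - S i)%nat with (n - i)%nat by lia.
    rewrite fact_simpl, mult_INR. pose proof (INR_fact_lt_0 n). pose proof (pos_INR n).
    rewrite S_INR in *. field. split; lra.
Qed.

Lemma CV_radius_prim_coef p i : CV_radius (prim_coef p i) = CV_radius p.
Proof.
  induction i as [|i IH]; [reflexivity|].
  change (prim_coef p (S i)) with (PS_Int (prim_coef p i)). now rewrite CV_radius_Int.
Qed.

Lemma is_RInt_PSeries_shift (A : nat -> R) a x : CV_radius A = p_infty ->
  is_RInt (fun s => PSeries A (s - a)) a x (PSeries (PS_Int A) (x - a)).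
Proof.
  intros HA.
  apply (is_RInt_ext (V := R_NormedModule) (fun s => scal 1 (PSeries A (1 * s + - a)))).
  { intros s _. unfold scal; simpl; unfold mult; simpl. rewrite Rmult_1_l. f_equal. ring. }
  apply (is_RInt_comp_lin (V := R_NormedModule)).
  replace (1 * a + - a) with 0 by ring. replace (1 * x + - a) with (x - a) by ring.
  apply is_RInt_PSeries. now rewrite HA.
Qed.

Definition powfact (x : R) (i : nat) : R := x ^ i / INR (fact i).

Lemma is_RInt_powfact i c t : is_RInt (fun w => powfact (w - c) i) c t (powfact (t - c) (S i)).
Proof.
  replace (powfact (t - c) (S i)) with (minus (powfact (t - c) (S i)) (powfact (c - c) (S i))).
  2: { unfold powfact. rewrite Rminus_diag. simpl. unfold minus, plus, opp; simpl.
       unfold Rdiv. ring. }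
  pose proof (INR_fact_lt_0 i). pose proof (pos_INR i).
  apply (is_RInt_derive (V := R_CompleteNormedModule) (fun w => powfact (w - c) (S i))).
  - intros y _. unfold powfact. auto_derive; [exact I|].
    change (fact i + i * fact i)%nat with (fact (S i)).
    change (match i with 0%nat => 1 | S _ => INR i + 1 end) with (INR (S i)).
    rewrite fact_simpl, mult_INR, S_INR. unfold Rminus. field. lra.
  - intros y _. apply (ex_derive_continuous (K := R_AbsRing) (V := R_NormedModule)).
    unfold powfact. auto_derive. lra.
Qed.

Definition dbl_int (f : R -> R -> R) (a c s t : R) : R :=
  RInt (fun r => RInt (fun w => f r w) c t) a s.

Definition dbl_integrable (f : R -> R -> R) (a b c d : R) : Prop :=
  (forall r t, a <= r <= b -> c <= t <= d -> ex_RInt (fun w => f r w) c t) /\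
  (forall s t, a <= s <= b -> c <= t <= d ->
     ex_RInt (fun r => RInt (fun w => f r w) c t) a s).

Lemma RInt_sub_scal (f g : R -> R) l c t : ex_RInt f c t -> ex_RInt g c t ->
  RInt (fun w => f w - l * g w) c t = RInt f c t - l * RInt g c t.
Proof. intros Hf Hg. rewrite RInt_minusR, RInt_scalR; auto. now apply ex_RInt_scalR. Qed.

Section DoubleIntegralLinear.

Variables (f g : R -> R -> R) (l a b c d : R).
Hypotheses (Hab : a <= b) (Hcd : c <= d)
  (Hf : dbl_integrable f a b c d) (Hg : dbl_integrable g a b c d).

Let inner_sub_scal s t r : a <= s <= b -> c <= t <= d -> Rmin a s < r < Rmax a s ->
  RInt (fun w => f r w - l * g r w) c t
  = RInt (fun w => f r w) c t - l * RInt (fun w => g r w) c t.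
Proof.
  intros Hs Ht Hr. rewrite Rmin_left, Rmax_right in Hr by lra.
  apply RInt_sub_scal; [apply Hf|apply Hg]; auto; lra.
Qed.

Lemma dbl_integrable_sub_scal : dbl_integrable (fun s t => f s t - l * g s t) a b c d.
Proof.
  destruct Hf as [F1 F2], Hg as [G1 G2]. split.
  - intros r t Hr Ht. apply ex_RInt_minusR; [|apply ex_RInt_scalR]; auto.
  - intros s t Hs Ht.
    apply (ex_RInt_ext (V := R_NormedModule))
      with (fun r => RInt (fun w => f r w) c t - l * RInt (fun w => g r w) c t).
    + intros r Hr. symmetry. now apply (inner_sub_scal s).
    + apply ex_RInt_minusR; [|apply ex_RInt_scalR]; auto.
Qed.

Lemma dbl_int_sub_scal s t : a <= s <= b -> c <= t <= d ->
  dbl_int (fun s t => f s t - l * g s t) a c s t = dbl_int f a c s t - l * dbl_int g a c s t.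
Proof.
  intros Hs Ht. unfold dbl_int.
  rewrite (RInt_ext _ (fun r => RInt (fun w => f r w) c t - l * RInt (fun w => g r w) c t))
    by (intros; now apply (inner_sub_scal s)).
  apply RInt_sub_scal; [apply Hf|apply Hg]; auto.
Qed.

End DoubleIntegralLinear.

(* [picard_term p q i (s - a) (t - c)] is V^i applied to the boundary data
   k(s,c) + k(a,t) - k(a,c), where V f (s, t) = dbl_int f a c s t;
   [picard_term_half] is the intermediate integral in t only. *)
Definition picard_term (p q : nat -> R) (i : nat) (x y : R) : R :=
  PSeries (prim_coef p i) x * powfact y i + powfact x i * PSeries (prim_coef q i) y
  - p 0%nat * powfact x i * powfact y i.

Definition picard_term_half (p q : nat -> R) (i : nat) (x y : R) : R :=
  PSeries (prim_coef p i) x * powfact y (S i) + powfact x i * PSeries (prim_coef q (S i)) y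
  - p 0%nat * powfact x i * powfact y (S i).

Section PicardTerms.

Variables (p q : nat -> R).
Hypotheses (Hp : CV_radius p = p_infty) (Hq : CV_radius q = p_infty).

Lemma is_RInt_picard_term_inner a c i r t :
  is_RInt (fun w => picard_term p q i (r - a) (w - c)) c t
    (picard_term_half p q i (r - a) (t - c)).
Proof.
  apply is_RInt_minusR; [apply is_RInt_plusR|]; apply is_RInt_scalR.
  - apply is_RInt_powfact.
  - apply is_RInt_PSeries_shift. now rewrite CV_radius_prim_coef.
  - apply is_RInt_powfact.
Qed.

Lemma is_RInt_picard_term_outer a c i s t :
  is_RInt (fun r => picard_term_half p q i (r - a) (t - c)) a s
    (picard_term p q (S i) (s - a) (t - c)).
Proof.
  apply is_RInt_minusR; [apply is_RInt_plusR|]; apply is_RInt_scalR_r.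
  - apply is_RInt_PSeries_shift. now rewrite CV_radius_prim_coef.
  - apply is_RInt_powfact.
  - apply is_RInt_scalR, is_RInt_powfact.
Qed.

Lemma dbl_int_picard_term a c i s t :
  dbl_int (fun s t => picard_term p q i (s - a) (t - c)) a c s t
  = picard_term p q (S i) (s - a) (t - c).
Proof.
  unfold dbl_int. rewrite (RInt_ext _ (fun r => picard_term_half p q i (r - a) (t - c))).
  - apply RInt_uniqueR, is_RInt_picard_term_outer.
  - intros r _. apply RInt_uniqueR, is_RInt_picard_term_inner.
Qed.

Lemma dbl_integrable_picard_term a b c d i :
  dbl_integrable (fun s t => picard_term p q i (s - a) (t - c)) a b c d.
Proof.
  split.
  - intros r t _ _. eapply ex_RInt_of_is, is_RInt_picard_term_inner.
  - intros s t _ _.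
    apply (ex_RInt_ext (V := R_NormedModule))
      with (fun r => picard_term_half p q i (r - a) (t - c)).
    + intros r _. symmetry. apply RInt_uniqueR, is_RInt_picard_term_inner.
    + eapply ex_RInt_of_is, is_RInt_picard_term_outer.
Qed.

End PicardTerms.

Fixpoint picard_rem (k : R -> R -> R) (p q : nat -> R) (a c C : R) (m : nat) : R -> R -> R :=
  match m with
  | O => k
  | S m' => fun s t =>
      picard_rem k p q a c C m' s t - C ^ m' * picard_term p q m' (s - a) (t - c)
  end.

Lemma picard_decomp k p q a c C M s t :
  k s t = sum_f_R0 (fun i => C ^ i * picard_term p q i (s - a) (t - c)) M
          + picard_rem k p q a c C (S M) s t.
Proof.
  induction M as [|M IH]; simpl; [ring|]. simpl in IH. rewrite IH at 1. ring.
Qed.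

Section GoursatPicard.

Variables (k : R -> R -> R) (p q : nat -> R) (a b c d C : R).
Hypotheses (Hab : a <= b) (Hcd : c <= d)
  (Hp : CV_radius p = p_infty) (Hq : CV_radius q = p_infty)
  (Hk : goursat_solution k a b c d C)
  (Hkp : forall s, a <= s <= b -> k s c = Series (fun n => p n * (s - a) ^ n))
  (Hkq : forall t, c <= t <= d -> k a t = Series (fun n => q n * (t - c) ^ n)).

Let rem := picard_rem k p q a c C.

(* For m = 0 this is the integral equation (p 0 = k a c by the boundary series);
   the step uses dbl_int (term m) = term (m + 1). *)
Lemma picard_rem_succ m : dbl_integrable (rem m) a b c d /\
  forall s t, a <= s <= b -> c <= t <= d -> rem (S m) s t = C * dbl_int (rem m) a c s t.
Proof.
  destruct Hk as [Hcont Heq].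
  induction m as [|m [IH1 IH2]].
  - split.
    + split; intros; [apply (cont_on_rect_ex_RInt_inner k a b c d)
                     |apply (cont_on_rect_ex_RInt_outer k a b c d)]; auto.
    + intros s t Hs Ht. unfold rem; simpl. unfold picard_term, powfact, prim_coef; simpl.
      assert (E : p 0%nat = k a c).
      { rewrite Hkp, Rminus_diag by lra. symmetry. apply PSeries_0. }
      unfold PSeries. rewrite <- Hkp, <- Hkq, E, (Heq s t Hs Ht) by auto.
      unfold dbl_int. field.
  - assert (Hterm := dbl_integrable_picard_term p q Hp Hq a b c d m).
    split; [now apply dbl_integrable_sub_scal|].
    intros s t Hs Ht.
    change (rem (S (S m)) s t)
      with (rem (S m) s t - C ^ S m * picard_term p q (S m) (s - a) (t - c)).
    change (rem (S m))
      with (fun s t => rem m s t - C ^ m * picard_term p q m (s - a) (t - c)).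
    rewrite IH2, (dbl_int_sub_scal _ _ _ a b c d), dbl_int_picard_term by auto. simpl. ring.
Qed.

Lemma picard_rem_bound B : (forall x y, in_rect a b c d x y -> Rabs (k x y) <= B) ->
  forall m s t, a <= s <= b -> c <= t <= d ->
    Rabs (rem m s t) <= B * Rabs C ^ m * powfact (s - a) m * powfact (t - c) m.
Proof.
  intros HB m. induction m as [|m IH]; intros s t Hs Ht.
  - unfold powfact; simpl. rewrite !Rdiv_1_r, !Rmult_1_r. now apply HB.
  - destruct (picard_rem_succ m) as [[I1 I2] Hrec].
    rewrite (Hrec s t Hs Ht), Rabs_mult. unfold dbl_int.
    set (K := B * Rabs C ^ m).
    assert (Hin : forall r, a <= r <= s -> Rabs (RInt (fun w => rem m r w) c t)
                                          <= K * powfact (r - a) m * powfact (t - c) (S m)).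
    { intros r Hr.
      eapply Rle_trans.
      { apply RInt_Rabs_le with (h := fun w => K * powfact (r - a) m * powfact (w - c) m).
        - lra.
        - apply I1; lra.
        - eapply ex_RInt_of_is, is_RInt_scalR, is_RInt_powfact.
        - intros w Hw. apply IH; lra. }
      right. apply RInt_uniqueR, is_RInt_scalR, is_RInt_powfact. }
    assert (Hout : Rabs (RInt (fun r => RInt (fun w => rem m r w) c t) a s)
                   <= K * powfact (s - a) (S m) * powfact (t - c) (S m)).
    { eapply Rle_trans.
      { apply RInt_Rabs_le with (h := fun r => K * powfact (r - a) m * powfact (t - c) (S m)).
        - lra.
        - apply I2; lra.
        - eapply ex_RInt_of_is, is_RInt_scalR_r, is_RInt_scalR, is_RInt_powfact.
        - intros r Hr. apply Hin; lra. }
      right. apply RInt_uniqueR, is_RInt_scalR_r, is_RInt_scalR, is_RInt_powfact. }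
    eapply Rle_trans; [apply Rmult_le_compat_l; [apply Rabs_pos|exact Hout]|].
    unfold K. simpl. right. ring.
Qed.

End GoursatPicard.

(** * The double series and the truncation k_hat *)

Definition coef_dominated (M rho : R) (p : nat -> R) : Prop :=
  forall n, Rabs (p n) <= M * rho ^ n / INR (fact n) ^ 2.

Lemma coef_dominated_nonneg M rho p : coef_dominated M rho p -> 0 <= M.
Proof.
  intros Hp. specialize (Hp 0%nat). simpl in Hp. pose proof (Rabs_pos (p 0%nat)). lra.
Qed.

Lemma CV_radius_coef_dominated M rho p : 0 <= rho -> coef_dominated M rho p ->
  CV_radius p = p_infty.
Proof.
  intros Hrho Hp. assert (HM := coef_dominated_nonneg _ _ _ Hp).
  assert (Hdisk : forall y, CV_disk p y).
  { intros y. apply ex_series_dominated with (fun n => M * ((rho * Rabs y) ^ n / INR (fact n))).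
    - intros n. rewrite Rabs_Rabsolu, Rabs_mult, <- RPow_abs, Rpow_mult_distr.
      pose proof (INR_fact_ge_1 n). pose proof (pow_le _ n Hrho).
      pose proof (pow_le _ n (Rabs_pos y)).
      apply Rle_trans with (M * rho ^ n / INR (fact n) ^ 2 * Rabs y ^ n);
        [now apply Rmult_le_compat_r|].
      set (A := M * (rho ^ n * Rabs y ^ n / INR (fact n))).
      assert (0 <= A) by (apply Rmult_le_pos; [|apply Rdiv_le_0_compat]; nra).
      replace (M * rho ^ n / INR (fact n) ^ 2 * Rabs y ^ n) with (A * / INR (fact n))
        by (unfold A; field; lra).
      rewrite <- (Rmult_1_r A) at 2. apply Rmult_le_compat_l; [assumption|].
      rewrite <- Rinv_1. apply Rinv_le_contravar; lra.
    - apply (ex_series_scal_l (V := R_NormedModule)), ex_series_exp_terms. }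
  assert (Hub : forall y : R, Rbar_le y (CV_radius p))
    by (intros y; apply (proj1 (Lub_Rbar_correct (CV_disk p))), Hdisk).
  destruct (CV_radius p) as [r| |]; [|reflexivity|].
  - specialize (Hub (r + 1)). simpl in Hub. lra.
  - specialize (Hub 0). contradiction.
Qed.

Definition picard_cell (C : R) (P : nat -> R) (U W : R) (i n : nat) : R :=
  C ^ i * powfact U i * prim_coef P i n * W ^ n.

Lemma picard_cell_lt C P U W i n : (n < i)%nat -> picard_cell C P U W i n = 0.
Proof.
  intros H. unfold picard_cell. rewrite prim_coef_eq.
  destruct (Nat.leb_spec i n); [lia|ring].
Qed.

Lemma picard_cell_diag C P U W i :
  picard_cell C P U W i i = C ^ i * powfact U i * P 0%nat * powfact W i.
Proof.
  unfold picard_cell. rewrite prim_coef_eq, Nat.leb_refl, Nat.sub_diag.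
  unfold powfact. simpl (INR (fact 0)). field. apply INR_fact_neq_0.
Qed.

Lemma picard_term_swap p q i x y : p 0%nat = q 0%nat ->
  picard_term q p i y x = picard_term p q i x y.
Proof. intros H. unfold picard_term. rewrite H. ring. Qed.

Lemma picard_term_Series C p q X Y i : p 0%nat = q 0%nat ->
  C ^ i * picard_term p q i X Y
  = Series (picard_cell C p Y X i) + Series (picard_cell C q X Y i) - picard_cell C q X Y i i.
Proof.
  intros H00. rewrite picard_cell_diag, <- H00. unfold picard_term, PSeries, picard_cell.
  rewrite (Series_ext (fun n => C ^ i * powfact Y i * prim_coef p i n * X ^ n)
             (fun n => C ^ i * powfact Y i * (prim_coef p i n * X ^ n))) by (intros; ring).
  rewrite (Series_ext (fun n => C ^ i * powfact X i * prim_coef q i n * Y ^ n)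
             (fun n => C ^ i * powfact X i * (prim_coef q i n * Y ^ n))) by (intros; ring).
  rewrite !Series_scal_l. ring.
Qed.

(* Comes from |P j| <= M (g |C| Dl)^j / (j!)^2 with j = n - i, U, W <= Dl and
   L = |C| Dl^2. *)
Definition cell_majorant (g L : R) (i n : nat) : R :=
  if (i <=? n)%nat
  then g ^ (n - i) * L ^ n / (INR (fact i) * INR (fact (n - i)) * INR (fact n)) else 0.

Lemma cell_majorant_nonneg g L i n : 0 <= g -> 0 <= L -> 0 <= cell_majorant g L i n.
Proof.
  intros Hg HL. unfold cell_majorant. destruct (i <=? n)%nat; [|lra].
  pose proof (INR_fact_lt_0 i). pose proof (INR_fact_lt_0 (n - i)). pose proof (INR_fact_lt_0 n).
  apply Rdiv_le_0_compat; [apply Rmult_le_pos; now apply pow_le|].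
  apply Rmult_lt_0_compat; [apply Rmult_lt_0_compat|]; auto.
Qed.

Lemma sum_cell_majorant g L n :
  sum_f_R0 (fun i => cell_majorant g L i n) n = bessel_term ((g + 1) * L) n.
Proof.
  unfold bessel_term. rewrite Rpow_mult_distr, Rplus_comm, binomial.
  transitivity (sum_f_R0 (fun i =>
    Binomial.C n i * 1 ^ i * g ^ (n - i) * (L ^ n / INR (fact n) ^ 2)) n).
  2: { rewrite <- scal_sum. unfold Rdiv. ring. }
  apply sum_eq. intros i Hi. unfold cell_majorant. destruct (Nat.leb_spec i n); [|lia].
  unfold Binomial.C. rewrite pow1.
  pose proof (INR_fact_lt_0 i). pose proof (INR_fact_lt_0 (n - i)). pose proof (INR_fact_lt_0 n).
  field. repeat split; lra.
Qed.

Lemma sum_cell_majorant_le g L M n : 0 <= g -> 0 <= L ->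
  sum_f_R0 (fun i => cell_majorant g L i n) M <= bessel_term ((g + 1) * L) n.
Proof.
  intros Hg HL. rewrite <- sum_cell_majorant.
  destruct (Nat.le_gt_cases M n).
  - apply sum_f_R0_le_mono; auto. intros; now apply cell_majorant_nonneg.
  - right. apply sum_f_R0_zero_tail; [lia|]. intros i Hi. unfold cell_majorant.
    destruct (Nat.leb_spec i n); [lia|reflexivity].
Qed.

Lemma ex_series_cell_majorant g L i : 0 <= g -> 0 <= L -> ex_series (cell_majorant g L i).
Proof.
  intros Hg HL. assert (HgL : 0 <= (g + 1) * L) by nra.
  apply ex_series_dominated with (bessel_term ((g + 1) * L)); [|now apply ex_series_bessel_term].
  intros n. rewrite Rabs_pos_eq by now apply cell_majorant_nonneg.
  eapply Rle_trans; [|apply (sum_cell_majorant_le g L i n); auto].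
  destruct i; [simpl; lra|]. rewrite tech5.
  assert (0 <= sum_f_R0 (fun j => cell_majorant g L j n) i)
    by (apply cond_pos_sum; intros; now apply cell_majorant_nonneg).
  lra.
Qed.

Lemma picard_cell_bound C P U W Mn g Dl i n :
  0 <= Mn -> 0 <= g -> 0 <= U <= Dl -> 0 <= W <= Dl -> coef_dominated Mn (g * Rabs C * Dl) P ->
  Rabs (picard_cell C P U W i n) <= Mn * cell_majorant g (Rabs C * Dl ^ 2) i n.
Proof.
  intros HM Hg HU HW HP. unfold picard_cell, cell_majorant. rewrite prim_coef_eq.
  destruct (Nat.leb_spec i n) as [Hin|Hin].
  2: { rewrite Rmult_0_r, Rmult_0_l, Rabs_R0, Rmult_0_r. lra. }
  destruct (Nat.le_exists_sub i n Hin) as [j [-> _]].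
  replace (j + i - i)%nat with j by lia. rewrite (Nat.add_comm j i).
  specialize (HP j).
  pose proof (INR_fact_lt_0 i). pose proof (INR_fact_lt_0 j). pose proof (INR_fact_lt_0 (i + j)).
  pose proof (Rabs_pos C).
  set (A := Rabs (P j)). set (F := INR (fact j)).
  assert (HA : A * F <= Mn * (g * Rabs C * Dl) ^ j / F).
  { apply Rmult_le_compat_r with (r := F) in HP; [|unfold F; lra].
    eapply Rle_trans; [exact HP|]. right. unfold F. field. lra. }
  assert (E1 : Rabs (C ^ i * powfact U i * (P j * F / INR (fact (i + j))) * W ^ (i + j)) =
     (Rabs C ^ i / (INR (fact i) * INR (fact (i + j)))) * (U ^ i * W ^ (i + j)) * (A * F)).
  { unfold powfact. rewrite !Rabs_mult, RPow_abs.
    rewrite (Rabs_pos_eq (U ^ i / _)) by (apply Rdiv_le_0_compat; [apply pow_le|]; lra).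
    rewrite (Rabs_pos_eq (W ^ (i + j))) by (apply pow_le; lra).
    unfold Rdiv. rewrite !Rabs_mult, (Rabs_pos_eq F) by (unfold F; lra).
    rewrite (Rabs_pos_eq (/ INR (fact (i + j)))) by (apply Rlt_le, Rinv_0_lt_compat; lra).
    unfold A. field. lra. }
  assert (E2 : Mn * (g ^ j * (Rabs C * Dl ^ 2) ^ (i + j) /
                (INR (fact i) * F * INR (fact (i + j)))) =
     (Rabs C ^ i / (INR (fact i) * INR (fact (i + j)))) * (Dl ^ i * Dl ^ (i + j)) *
       (Mn * (g * Rabs C * Dl) ^ j / F)).
  { rewrite !Rpow_mult_distr, !pow_add.
    replace ((Dl ^ 2) ^ i) with (Dl ^ i * Dl ^ i) by (rewrite <- Rpow_mult_distr; f_equal; ring).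
    replace ((Dl ^ 2) ^ j) with (Dl ^ j * Dl ^ j) by (rewrite <- Rpow_mult_distr; f_equal; ring).
    field. unfold F; lra. }
  rewrite E1, E2.
  apply Rmult_le_compat; [| |apply Rmult_le_compat_l|exact HA].
  - apply Rmult_le_pos; [apply Rdiv_le_0_compat; [apply pow_le|]; nra|].
    apply Rmult_le_pos; apply pow_le; lra.
  - apply Rmult_le_pos; [apply Rabs_pos|unfold F; lra].
  - apply Rdiv_le_0_compat; [apply pow_le|]; nra.
  - apply Rmult_le_compat; try (apply pow_le; lra); apply pow_incr; lra.
Qed.

Lemma sum_n_m_1 (f : nat -> R) N : sum_n_m f 1 N = sum_f_R0 f N - f 0%nat.
Proof.
  rewrite <- sum_n_Reals. unfold sum_n.
  rewrite (sum_n_m_Chasles f 0 0 N), sum_n_n by lia.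
  assert (Hz : forall z : R, z = f 0%nat + z - f 0%nat) by (intros; ring). apply Hz.
Qed.

(* The two sums defining p_hat are the truncations, to n <= N, of the double
   series of C^i * picard_term p q i (b - a) (d - c) (one row i at a time). *)
Lemma p_hat_mul_pow N a b c d C p q n :
  p_hat N a b c d C p q n * (b - a) ^ n =
  sum_f_R0 (fun i => picard_cell C p (d - c) (b - a) i n) n
  + (sum_f_R0 (fun j => picard_cell C q (b - a) (d - c) n (n + j)) N
     - picard_cell C q (b - a) (d - c) n n).
Proof.
  pose proof (INR_fact_lt_0 n).
  unfold p_hat. rewrite Rmult_plus_distr_r. f_equal.
  - rewrite sum_n_Reals, Rmult_comm, scal_sum, <- sum_f_R0_rev. apply sum_eq.
    intros j Hj. unfold picard_cell, powfact. rewrite prim_coef_eq.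
    destruct (Nat.leb_spec j n); [|lia].
    pose proof (INR_fact_lt_0 j). pose proof (INR_fact_lt_0 (n - j)).
    replace (n - (n - j))%nat with j by lia. rewrite Rpow_mult_distr. field. lra.
  - rewrite sum_n_m_1, Rmult_minus_distr_r, Rmult_comm, scal_sum, Nat.add_0_r. f_equal.
    + apply sum_eq. intros j Hj. unfold picard_cell, powfact. rewrite prim_coef_eq.
      destruct (Nat.leb_spec n (n + j)); [|lia]. replace (n + j - n)%nat with j by lia.
      pose proof (INR_fact_lt_0 j). pose proof (INR_fact_lt_0 (n + j)).
      field. lra.
    + rewrite picard_cell_diag. unfold powfact. simpl (INR (fact 0)). field. lra.
Qed.

(* In row i, k_hat keeps the q-cells with index n <= i + N when i <= N and only the
   diagonal one (which picard_term_Series subtracts) when i > N. *)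
Definition row_cut (N i : nat) : nat := if (i <=? N)%nat then (i + N)%nat else i.

Lemma picard_sum_sub_p_hat N M a b c d C p q : p 0%nat = q 0%nat -> (N <= M)%nat ->
  sum_f_R0 (fun i => C ^ i * picard_term p q i (b - a) (d - c)) M
  - sum_f_R0 (fun n => p_hat N a b c d C p q n * (b - a) ^ n) N
  = sum_f_R0 (fun i =>
      (Series (picard_cell C p (d - c) (b - a) i)
       - sum_f_R0 (picard_cell C p (d - c) (b - a) i) N)
      + (Series (picard_cell C q (b - a) (d - c) i)
         - sum_f_R0 (picard_cell C q (b - a) (d - c) i) (row_cut N i))) M.
Proof.
  intros H00 HNM.
  set (cp := picard_cell C p (d - c) (b - a)). set (cq := picard_cell C q (b - a) (d - c)).
  rewrite (sum_eq _ _ N (fun n _ => p_hat_mul_pow N a b c d C p q n)), plus_sum.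
  fold cp cq.
  assert (E1 : sum_f_R0 (fun n => sum_f_R0 (fun i => cp i n) n) N =
               sum_f_R0 (fun i => sum_f_R0 (fun n => cp i n) N) M).
  { rewrite sum_f_R0_swap. apply sum_eq. intros n Hn. symmetry.
    apply sum_f_R0_zero_tail; [lia|]. intros i Hi. apply picard_cell_lt; lia. }
  assert (E2 : sum_f_R0 (fun n => sum_f_R0 (fun j => cq n (n + j)%nat) N - cq n n) N =
               sum_f_R0 (fun i => sum_f_R0 (cq i) (row_cut N i) - cq i i) M).
  { rewrite (sum_f_R0_zero_tail (fun i => sum_f_R0 (cq i) (row_cut N i) - cq i i) N M HNM).
    - apply sum_eq. intros i Hi. unfold row_cut. destruct (Nat.leb_spec i N); [|lia].
      rewrite sum_f_R0_zero_head; [reflexivity|]. intros; apply picard_cell_lt; lia.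
    - intros i Hi. unfold row_cut. destruct (Nat.leb_spec i N); [lia|].
      replace i with (i + 0)%nat at 2 by lia.
      rewrite sum_f_R0_zero_head by (intros; apply picard_cell_lt; lia).
      simpl. rewrite Nat.add_0_r. ring. }
  rewrite E1, E2,
    (sum_eq _ _ M (fun i _ => picard_term_Series C p q (b - a) (d - c) i H00)).
  rewrite <- plus_sum, <- minus_sum. apply sum_eq. intros i _. fold cp cq.
  replace (sum_f_R0 (fun n => cp i n) N) with (sum_f_R0 (cp i) N) by reflexivity. ring.
Qed.

Lemma picard_sum_sub_p_hat_le N M a b c d C p q Mn g Dl :
  0 <= Mn -> 0 <= g -> 0 <= b - a <= Dl -> 0 <= d - c <= Dl ->
  coef_dominated Mn (g * Rabs C * Dl) p -> coef_dominated Mn (g * Rabs C * Dl) q ->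
  p 0%nat = q 0%nat -> (N <= M)%nat ->
  Rabs (sum_f_R0 (fun i => C ^ i * picard_term p q i (b - a) (d - c)) M
        - sum_f_R0 (fun n => p_hat N a b c d C p q n * (b - a) ^ n) N)
  <= 2 * Mn * (Series (bessel_term ((g + 1) * (Rabs C * Dl ^ 2)))
               - sum_f_R0 (bessel_term ((g + 1) * (Rabs C * Dl ^ 2))) N).
Proof.
  intros HM Hg HX HY Hp Hq H00 HNM.
  rewrite picard_sum_sub_p_hat by auto.
  set (L := Rabs C * Dl ^ 2).
  assert (HL : 0 <= L) by (apply Rmult_le_pos; [apply Rabs_pos|apply pow_le; lra]).
  set (om := cell_majorant g L).
  assert (Hom : forall i, ex_series (om i)) by (intros; now apply ex_series_cell_majorant).
  assert (Hrow : forall i,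
    Rabs ((Series (picard_cell C p (d - c) (b - a) i)
           - sum_f_R0 (picard_cell C p (d - c) (b - a) i) N)
          + (Series (picard_cell C q (b - a) (d - c) i)
             - sum_f_R0 (picard_cell C q (b - a) (d - c) i) (row_cut N i)))
    <= 2 * Mn * (Series (om i) - sum_f_R0 (om i) N)).
  { intros i.
    assert (Hw : ex_series (fun n => Mn * om i n))
      by now apply (ex_series_scal_l (V := R_NormedModule)).
    assert (Tp := Series_tail_le (picard_cell C p (d - c) (b - a) i) _ N N
                    (fun n => picard_cell_bound C p _ _ Mn g Dl i n HM Hg HY HX Hp) Hw (le_n N)).
    assert (Tq := Series_tail_le (picard_cell C q (b - a) (d - c) i) _ N (row_cut N i)
                    (fun n => picard_cell_bound C q _ _ Mn g Dl i n HM Hg HX HY Hq) Hw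
                    ltac:(unfold row_cut; destruct (Nat.leb_spec i N); lia)).
    assert (Es : sum_f_R0 (fun n => Mn * om i n) N = Mn * sum_f_R0 (om i) N)
      by (rewrite scal_sum; apply sum_eq; intros; ring).
    rewrite Series_scal_l in Tp, Tq. fold L om in Tp, Tq. rewrite Es in Tp, Tq.
    eapply Rle_trans; [apply Rabs_triang|]. lra. }
  eapply Rle_trans; [apply Rsum_abs|].
  eapply Rle_trans; [apply sum_Rle; intros i _; apply Hrow|].
  rewrite (sum_eq _ (fun i => (Series (om i) - sum_f_R0 (om i) N) * (2 * Mn))) by (intros; ring).
  rewrite <- scal_sum, minus_sum, <- (proj1 (Series_sum_f_R0 om M Hom)), sum_f_R0_swap.
  apply Rmult_le_compat_l; [lra|].
  eapply Rle_trans; [apply Rle_abs|].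
  apply Series_tail_le; [|apply ex_series_bessel_term; nra|lia].
  intros n. rewrite Rabs_pos_eq by (apply cond_pos_sum; intros; now apply cell_majorant_nonneg).
  now apply sum_cell_majorant_le.
Qed.

Lemma k_hat_error_le k p q a b c d C N M Mn g B :
  let Delta := Rmax (b - a) (d - c) in
  a <= b -> c <= d -> 0 <= g -> (N <= M)%nat -> p 0%nat = q 0%nat ->
  coef_dominated Mn (g * Rabs C * Delta) p -> coef_dominated Mn (g * Rabs C * Delta) q ->
  goursat_solution k a b c d C ->
  (forall s, a <= s <= b -> k s c = Series (fun n => p n * (s - a) ^ n)) ->
  (forall t, c <= t <= d -> k a t = Series (fun n => q n * (t - c) ^ n)) ->
  (forall x y, in_rect a b c d x y -> Rabs (k x y) <= B) ->
  Rabs (k b d - k_hat N a b c d C p q)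
  <= B * Rabs C ^ S M * powfact (b - a) (S M) * powfact (d - c) (S M)
     + 2 * Mn * (Series (bessel_term ((g + 1) * (Rabs C * Delta ^ 2)))
                 - sum_f_R0 (bessel_term ((g + 1) * (Rabs C * Delta ^ 2))) N).
Proof.
  intros Delta Hab Hcd Hg HNM H00 Hp Hq Hk Hkp Hkq HB.
  assert (HX : 0 <= b - a <= Delta) by (split; [lra|apply Rmax_l]).
  assert (HY : 0 <= d - c <= Delta) by (split; [lra|apply Rmax_r]).
  assert (Hrho : 0 <= g * Rabs C * Delta) by (pose proof (Rabs_pos C); apply Rmult_le_pos; nra).
  assert (HM := coef_dominated_nonneg _ _ _ Hp).
  assert (HR := picard_rem_bound k p q a b c d C Hab Hcd
                  (CV_radius_coef_dominated _ _ _ Hrho Hp) (CV_radius_coef_dominated _ _ _ Hrho Hq)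
                  Hk Hkp Hkq B HB (S M) b d ltac:(lra) ltac:(lra)).
  assert (T1 := picard_sum_sub_p_hat_le N M a b c d C p q Mn g Delta HM Hg HX HY Hp Hq H00 HNM).
  assert (T2 := picard_sum_sub_p_hat_le N M c d a b C q p Mn g Delta HM Hg HY HX Hq Hp
                  (eq_sym H00) HNM).
  rewrite (sum_eq _ (fun i => C ^ i * picard_term p q i (b - a) (d - c)))
    in T2 by (intros; now rewrite picard_term_swap).
  rewrite (picard_decomp k p q a c C M b d).
  (* q_hat N a b c d C p q is p_hat N c d a b C q p by definition. *)
  replace (k_hat N a b c d C p q) with
    (/ 2 * (sum_f_R0 (fun n => p_hat N a b c d C p q n * (b - a) ^ n) N
            + sum_f_R0 (fun n => p_hat N c d a b C q p n * (d - c) ^ n) N))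
    by (unfold k_hat; now rewrite sum_n_Reals, plus_sum).
  set (S0 := sum_f_R0 (fun i => C ^ i * picard_term p q i (b - a) (d - c)) M) in *.
  set (A1 := sum_f_R0 (fun n => p_hat N a b c d C p q n * (b - a) ^ n) N) in *.
  set (A2 := sum_f_R0 (fun n => p_hat N c d a b C q p n * (d - c) ^ n) N) in *.
  set (Rm := picard_rem k p q a c C (S M) b d) in *.
  replace (S0 + Rm - / 2 * (A1 + A2)) with (Rm + (/ 2 * (S0 - A1) + / 2 * (S0 - A2))) by field.
  eapply Rle_trans; [apply Rabs_triang|]. apply Rplus_le_compat; [exact HR|].
  eapply Rle_trans; [apply Rabs_triang|]. rewrite !Rabs_mult, (Rabs_pos_eq (/ 2)) by lra.
  lra.
Qed.

Lemma pq_norm_coef_dominated g C Delta p q : 0 < g * Rabs C * Delta ->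
  is_finite (pq_norm_Rbar g C Delta p q) ->
  coef_dominated (pq_norm g C Delta p q) (g * Rabs C * Delta) p /\
  coef_dominated (pq_norm g C Delta p q) (g * Rabs C * Delta) q.
Proof.
  intros Hrho Hfin.
  assert (Hw : forall n, pq_weighted g C Delta p q n <= pq_norm g C Delta p q).
  { intros n.
    pose proof (Sup_seq_minor_le (fun n => Finite (pq_weighted g C Delta p q n))
                  (pq_weighted g C Delta p q n) n (Rbar_le_refl _)) as H.
    unfold is_finite, pq_norm_Rbar in Hfin. unfold pq_norm, pq_norm_Rbar.
    rewrite <- Hfin in H. exact H. }
  assert (Hcoef : forall (r : R) n,
    Rabs (INR (fact n) ^ 2 * r / (g * Rabs C * Delta) ^ n) <= pq_norm g C Delta p q ->
    Rabs r <= pq_norm g C Delta p q * (g * Rabs C * Delta) ^ n / INR (fact n) ^ 2).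
  { intros r n H. set (rho := g * Rabs C * Delta) in *.
    pose proof (INR_fact_lt_0 n). assert (Hrn : 0 < rho ^ n) by now apply pow_lt.
    rewrite Rabs_div, Rabs_mult, (Rabs_pos_eq (INR (fact n) ^ 2)), (Rabs_pos_eq (rho ^ n)) in H
      by (try apply pow_le; lra).
    apply Rmult_le_compat_r with (r := rho ^ n / INR (fact n) ^ 2) in H;
      [|apply Rlt_le, Rdiv_lt_0_compat; [|apply pow_lt]; lra].
    replace (INR (fact n) ^ 2 * Rabs r / rho ^ n * (rho ^ n / INR (fact n) ^ 2))
      with (Rabs r) in H by (field; lra).
    unfold Rdiv in *. rewrite Rmult_assoc. exact H. }
  split; intros n; apply Hcoef; refine (Rle_trans _ _ _ _ (Hw n)).
  - apply Rmax_l.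
  - apply Rmax_r.
Qed.

(* The first Bessel factor is used only through I0 >= 1. *)
Lemma bessel_tail_le_I0 g C Delta N : 0 <= g ->
  Series (bessel_term ((g + 1) * (Rabs C * Delta ^ 2)))
  - sum_f_R0 (bessel_term ((g + 1) * (Rabs C * Delta ^ 2))) N
  <= I0 (2 * sqrt (g * Rabs C) * Delta) * I0 (2 * sqrt ((g + 1) * Rabs C) * Delta)
     * ((Rabs C * Delta ^ 2) ^ (N + 1) * (g + 1) ^ (N + 1)) / INR (fact (N + 1)) ^ 2.
Proof.
  intros Hg. pose proof (Rabs_pos C).
  set (z := (g + 1) * (Rabs C * Delta ^ 2)).
  assert (Hz : 0 <= z) by (apply Rmult_le_pos; [lra|apply Rmult_le_pos; [lra|apply pow2_ge_0]]).
  assert (HIa := I0_ge_1 (g * Rabs C) Delta ltac:(nra)).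
  assert (EIb : I0 (2 * sqrt ((g + 1) * Rabs C) * Delta) = Series (bessel_term z))
    by (rewrite I0_Series by nra; unfold z; f_equal; f_equal; ring).
  assert (HIb : 1 <= Series (bessel_term z)) by (rewrite <- EIb; apply I0_ge_1; nra).
  replace (I0 (2 * sqrt (g * Rabs C) * Delta) * I0 (2 * sqrt ((g + 1) * Rabs C) * Delta)
           * ((Rabs C * Delta ^ 2) ^ (N + 1) * (g + 1) ^ (N + 1)) / INR (fact (N + 1)) ^ 2)
    with (I0 (2 * sqrt (g * Rabs C) * Delta) * Series (bessel_term z) * bessel_term z (S N))
    by (rewrite EIb, Nat.add_1_r; unfold bessel_term, z; rewrite Rpow_mult_distr;
        unfold Rdiv; ring).
  pose proof (bessel_term_nonneg z (S N) Hz).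
  eapply Rle_trans; [now apply bessel_tail_le|].
  assert (0 <= Series (bessel_term z) * bessel_term z (S N)) by nra.
  nra.
Qed.

Lemma powfact_prod_eventually_le B K X Y eps :
  0 <= B -> 0 <= K -> 0 <= X -> 0 <= Y -> 0 < eps ->
  exists m0, forall m, (m0 <= m)%nat -> B * K ^ m * powfact X m * powfact Y m <= eps.
Proof.
  intros HB HK HX HY Heps.
  set (x := K * X * Y). assert (Hx : 0 <= x) by (apply Rmult_le_pos; [apply Rmult_le_pos|]; lra).
  destruct (cv_speed_pow_fact x (eps / (B + 1))) as [m0 Hm0]; [apply Rdiv_lt_0_compat; lra|].
  exists m0. intros m Hm. specialize (Hm0 m Hm). unfold R_dist in Hm0.
  pose proof (INR_fact_ge_1 m).
  assert (Hxm : 0 <= x ^ m / INR (fact m)) by (apply Rdiv_le_0_compat; [apply pow_le|]; lra).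
  rewrite Rminus_0_r, Rabs_pos_eq in Hm0 by exact Hxm.
  assert (E : K ^ m * powfact X m * powfact Y m = x ^ m / INR (fact m) * / INR (fact m))
    by (unfold powfact, x; rewrite !Rpow_mult_distr; unfold Rdiv; ring).
  assert (x ^ m / INR (fact m) * / INR (fact m) <= x ^ m / INR (fact m)).
  { rewrite <- (Rmult_1_r (x ^ m / INR (fact m))) at 2. apply Rmult_le_compat_l; [exact Hxm|].
    rewrite <- Rinv_1. apply Rinv_le_contravar; lra. }
  replace (B * K ^ m * powfact X m * powfact Y m)
    with (B * (x ^ m / INR (fact m) * / INR (fact m))) by (rewrite <- E; ring).
  apply Rle_trans with (B * (eps / (B + 1))); [apply Rmult_le_compat_l; lra|].
  apply Rle_trans with ((B + 1) * (eps / (B + 1))); [nra|right; field; lra].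
Qed.

Theorem mainTheorem5 (a b c d C : R) (N gamma : nat) (p q : nat -> R)
  (k : R -> R -> R) :
  a < b -> c < d -> C <> 0 -> (2 <= N)%nat -> (1 <= gamma)%nat ->
  p 0%nat = q 0%nat ->
  is_finite (pq_norm_Rbar (INR gamma) C (Rmax (b - a) (d - c)) p q) ->
  goursat_solution k a b c d C ->
  (forall s, a <= s <= b -> k s c = Series (fun n => p n * (s - a) ^ n)) ->
  (forall t, c <= t <= d -> k a t = Series (fun n => q n * (t - c) ^ n)) ->
  let Delta := Rmax (b - a) (d - c) in
  Rabs (k b d - k_hat N a b c d C p q) <=
    2 * pq_norm (INR gamma) C Delta p q
      * I0 (2 * sqrt (INR gamma * Rabs C) * Delta)
      * I0 (2 * sqrt ((INR gamma + 1) * Rabs C) * Delta)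
      * ((Rabs C * Delta ^ 2) ^ (N + 1) * (INR gamma + 1) ^ (N + 1))
      / (INR (fact (N + 1))) ^ 2.
Proof.
  intros Hab Hcd HC _ Hgam H00 Hfin Hk Hkp Hkq Delta.
  assert (Hg : 1 <= INR gamma) by exact (le_INR 1 gamma Hgam).
  assert (Hrho : 0 < INR gamma * Rabs C * Delta).
  { pose proof (Rabs_pos_lt C HC). pose proof (Rmax_l (b - a) (d - c)).
    apply Rmult_lt_0_compat; [nra|unfold Delta; lra]. }
  destruct (pq_norm_coef_dominated _ C Delta p q Hrho Hfin) as [Hp Hq].
  assert (HM := coef_dominated_nonneg _ _ _ Hp).
  destruct (cont_on_rect_bounded k a b c d ltac:(lra) ltac:(lra) (proj1 Hk)) as [B [HB0 HB]].
  assert (Htail := bessel_tail_le_I0 (INR gamma) C Delta N ltac:(lra)).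
  apply Rle_plus_epsilon. intros eps Heps.
  destruct (powfact_prod_eventually_le B (Rabs C) (b - a) (d - c) eps
              HB0 (Rabs_pos C) ltac:(lra) ltac:(lra) Heps) as [m0 Hm0].
  eapply Rle_trans.
  { apply (k_hat_error_le k p q a b c d C N (max m0 N) (pq_norm (INR gamma) C Delta p q)
                          (INR gamma) B); auto; lra || lia. }
  specialize (Hm0 (S (max m0 N)) ltac:(lia)).
  apply Rmult_le_compat_l with (r := 2 * pq_norm (INR gamma) C Delta p q) in Htail; [|lra].
  change (Rmax (b - a) (d - c)) with Delta. unfold Rdiv in *. lra.
Qed.
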